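(* Let $\Gamma=(\mathcal{V},\mathcal{H})$ be an $(l,r)$-hyperflower on $N$ vertices with peripheral vertices $v_1,\ldots,v_l$. Let $\hat{\Gamma}=(\hat{\mathcal{V}},\hat{\mathcal{H}})$ be the $(1,r)$-hyperflower defined by $\hat{\mathcal{V}}:=\mathcal{V}\setminus\{v_2,\ldots,v_l\}$ and $\hat{\mathcal{H}}:=\{h\in\mathcal{H}: v_2,\ldots,v_l\notin h\}$. Then the spectrum of $\Gamma$ is given by the $N-l+1$ eigenvalues of $\hat{\Gamma}$ (counted with multiplicity) together with the eigenvalue $1$ with multiplicity at least $l-1$; that is, the eigenvalues of $\Gamma$ counted with multiplicity are those of $\hat\Gamma$ together with $l-1$ further eigenvalues equal to $1$.
   Context: A hypergraph $\Gamma=(\mathcal{V},\mathcal{H})$ has a finite vertex set $\mathcal{V}$ and a set $\mathcal{H}$ of nonempty subsets of $\mathcal{V}$ (hyperedges); standing assumption: no isolated vertices. $\deg(v)$ is the number of hyperedges containing $v$, $D$ the diagonal degree matrix, $A$ the matrix with $A_{ii}=0$ and $A_{ij}=-\#\{h\in\mathcal{H}: v_i,v_j\in h\}$ for $i\ne j$, and the spectrum of $\Gamma$ is the spectrum of its (signless) normalized Laplacian $L=\mathrm{Id}-D^{-1}A$. An $(l,r)$-hyperflower is a hypergraph whose vertex set is $\mathcal{V}=U\sqcup\mathcal{W}$ with $U=\{v_1,\ldots,v_l\}$ (peripheral vertices) and such that there are $r$ pairwise disjoint nonempty sets $h_1,\ldots,h_r\subseteq\mathcal{W}$ with $\mathcal{H}=\{h_i\cup\{v_j\}: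 i=1,\ldots,r,\ j=1,\ldots,l\}$ (by the no-isolated-vertex assumption, $\mathcal{W}=h_1\cup\cdots\cup h_r$). *)

From HB Require Import structures.
From mathcomp Require Import all_boot all_order all_algebra.
Set Implicit Arguments. Unset Strict Implicit. Unset Printing Implicit Defensive.
Import Order.TTheory GRing.Theory Num.Theory.
Local Open Scope ring_scope.

(* A hypergraph is given by a vertex set S (a finite subset of a finType T)
   and a set H of hyperedges (subsets of S).  Vertices of S are indexed by
   'I_#|S| through enum_val. *)
Section Hypergraph.
Variables (T : finType) (R : fieldType).

Definition hg_vtx (S : {set T}) (i : 'I_#|S|) : T := @enum_val T (pred_of_set S) i.

Definition hg_deg (H : {set {set T}}) (v : T) : nat := #|[set h in H | v \in h]|.

Definition hg_cnt (H : {set {set T}}) (u w : T) : nat :=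
  #|[set h in H | (u \in h) && (w \in h)]|.

Definition hg_D (S : {set T}) (H : {set {set T}}) : 'M[R]_#|S| :=
  \matrix_(i, j) (if i == j then (hg_deg H (hg_vtx i))%:R else 0).

Definition hg_A (S : {set T}) (H : {set {set T}}) : 'M[R]_#|S| :=
  \matrix_(i, j) (if i == j then 0 else - (hg_cnt H (hg_vtx i) (hg_vtx j))%:R).

Definition hg_L (S : {set T}) (H : {set {set T}}) : 'M[R]_#|S| :=
  1%:M - invmx (hg_D S H) *m hg_A S H.

(* The (l,r)-hyperflower with peripheral vertices v 0, ..., v (l-1)
   and petals hs 0, ..., hs (r-1). *)
Definition flower_V (l r : nat) (v : 'I_l -> T) (hs : 'I_r -> {set T}) : {set T} :=
  [set v j | j : 'I_l] :|: \bigcup_(i < r) hs i.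

Definition flower_H (l r : nat) (v : 'I_l -> T) (hs : 'I_r -> {set T}) : {set {set T}} :=
  [set hs i :|: [set v j] | i : 'I_r, j : 'I_l].

End Hypergraph.

From HB Require Import structures.
From mathcomp Require Import all_boot all_order all_algebra.
Set Implicit Arguments. Unset Strict Implicit. Unset Printing Implicit Defensive.
Import Order.TTheory GRing.Theory Num.Theory.
Local Open Scope ring_scope.

(** For a hypergraph with no isolated vertex, L = 1 + P where
    P x y = #{h | x, y in h} / deg x for x <> y and P x x = 0.  In a hyperflower
    all peripheral vertices have the same row of P (they share no hyperedge and
    meet each petal vertex exactly once), so P = U W, where U is the 0/1 matrix
    of the map collapsing v_1, ..., v_l onto one peripheral vertex and W keeps
    the rows of P at the vertices of the smaller flower; summing the columns of
    the collapsed vertices turns W U into the matrix P of that flower.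
    Sylvester's identity y^n det (y - W U) = y^m det (y - U W), taken at
    y = X - 1 with n - m = l - 1, gives the factor (X - 1)^(l - 1). *)

(* Sylvester's determinant identity: [P *m M] and [M *m P] are block triangular. *)
Lemma det_scalar_sub_mulmxC (R : comNzRingType) n m
    (U : 'M[R]_(n, m)) (W : 'M[R]_(m, n)) (y : R) :
  y ^+ n * \det (y%:M - W *m U) = y ^+ m * \det (y%:M - U *m W).
Proof.
pose M := block_mx (y%:M : 'M_n) U W (1%:M : 'M_m).
pose P := block_mx (1%:M : 'M_n) 0 (- W) (y%:M : 'M_m).
have detP : \det P = y ^+ m by rewrite det_lblock det1 det_scalar mul1r.
have PM : P *m M = block_mx y%:M U 0 (y%:M - W *m U).
  rewrite mulmx_block !mul1mx !mul0mx !addr0 mulNmx mul_mx_scalar mul_scalar_mx.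
  by rewrite mulmx1 addNr addrC mulNmx.
have MP : M *m P = block_mx (y%:M - U *m W) (y *: U) 0 y%:M.
  rewrite mulmx_block !mulmx1 !mulmx0 !add0r mulmxN mul_mx_scalar mul_scalar_mx.
  by rewrite mul1mx scale1r addrN addrC.
have := congr1 determinant PM; rewrite det_mulmx det_ublock det_scalar detP => ePM.
have := congr1 determinant MP; rewrite det_mulmx det_ublock det_scalar detP => eMP.
by rewrite -ePM mulrC eMP mulrC.
Qed.

Lemma char_poly_add1mx (R : comNzRingType) n (B : 'M[R]_n) :
  char_poly (1%:M + B) = \det (('X - 1)%:M - map_mx polyC B).
Proof.
rewrite /char_poly /char_poly_mx map_mxD map_mx1 opprD addrA.
by congr (\det (_ - _)); rewrite raddfB.
Qed.

Lemma char_poly_add1_mulmxC (R : idomainType) n m k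
    (U : 'M[R]_(n, m)) (W : 'M[R]_(m, n)) :
  n = (m + k)%N ->
  char_poly (1%:M + U *m W) = ('X - 1) ^+ k * char_poly (1%:M + W *m U).
Proof.
move=> enk; subst n; rewrite !char_poly_add1mx !map_mxM.
have Xm1_neq0 : ('X - 1 : {poly R}) ^+ m != 0 by rewrite expf_neq0 ?polyXsubC_eq0.
apply: (mulfI Xm1_neq0).
by rewrite -det_scalar_sub_mulmxC exprD -mulrA mulrCA mulrA.
Qed.

Lemma hg_vtx_in (T : finType) (S : {set T}) (i : 'I_#|S|) : hg_vtx i \in S.
Proof. exact: enum_valP. Qed.

Section Lumping.
Variables (R : idomainType) (T : finType).

Definition vtx_mx (S : {set T}) (e : T -> T -> R) : 'M[R]_#|S| :=
  \matrix_(i, j) e (hg_vtx i) (hg_vtx j).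

(* With U the 0/1 matrix of [pi] and W the rows of [e] at S', the hypotheses
   say [vtx_mx S e = U *m W] and [vtx_mx S' e' = W *m U]. *)
Lemma char_poly_lump (S S' : {set T}) (e e' : T -> T -> R) (pi : T -> T) k :
  {in S, forall x, pi x \in S'} ->
  {in S &, forall x x', e x x' = e (pi x) x'} ->
  {in S' &, forall y y', e' y y' = \sum_(x in S | pi x == y') e y x} ->
  #|S| = (#|S'| + k)%N ->
  char_poly (1%:M + vtx_mx S e) = ('X - 1) ^+ k * char_poly (1%:M + vtx_mx S' e').
Proof.
move=> piS e_pi e'_sum cardS.
pose U : 'M[R]_(#|S|, #|S'|) := \matrix_(i, k) (pi (hg_vtx i) == hg_vtx k)%:R.
pose W : 'M[R]_(#|S'|, #|S|) := \matrix_(k, j) e (hg_vtx k) (hg_vtx j).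
have -> : vtx_mx S e = U *m W.
  apply/matrixP => i j; rewrite !mxE; under eq_bigr do rewrite !mxE.
  rewrite -(big_enum_val (fun y => (pi (hg_vtx i) == y)%:R * e y (hg_vtx j))) /=.
  rewrite (bigD1 (pi (hg_vtx i))) ?piS ?hg_vtx_in //= eqxx mul1r big1 ?addr0.
    by rewrite e_pi ?hg_vtx_in.
  by move=> y /andP[_ /negPf]; rewrite eq_sym => ->; rewrite mul0r.
have -> : vtx_mx S' e' = W *m U.
  apply/matrixP => i j; rewrite !mxE; under eq_bigr do rewrite !mxE.
  rewrite -(big_enum_val (fun x => e (hg_vtx i) x * (pi x == hg_vtx j)%:R)) /=.
  rewrite e'_sum ?hg_vtx_in // big_mkcondr /=; apply: eq_bigr => x _.
  by case: eqP; rewrite ?mulr1 ?mulr0.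
exact: char_poly_add1_mulmxC.
Qed.

End Lumping.

Section NormalizedLaplacian.
Variables (R : fieldType) (T : finType).

Definition hg_trans (H : {set {set T}}) (x y : T) : R :=
  if x == y then 0 else (hg_cnt H x y)%:R / (hg_deg H x)%:R.

Lemma hg_LE (S : {set T}) (H : {set {set T}}) :
  {in S, forall x, (hg_deg H x)%:R != 0 :> R} ->
  hg_L R S H = 1%:M + vtx_mx S (hg_trans H).
Proof.
move=> deg_neq0; rewrite /hg_L.
pose d : 'rV[R]_#|S| := \row_i (hg_deg H (hg_vtx i))%:R.
pose d_inv : 'rV[R]_#|S| := \row_i ((hg_deg H (hg_vtx i))%:R)^-1.
have -> : hg_D R S H = diag_mx d.
  by apply/matrixP => i j; rewrite !mxE; case: eqP => [->|]; rewrite ?mulr1n ?mulr0n.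
have d_invK : diag_mx d_inv *m diag_mx d = 1%:M.
  rewrite mulmx_diag -diag_const_mx; congr diag_mx; apply/matrixP => i j.
  by rewrite !mxE mulVf ?deg_neq0 ?hg_vtx_in.
have -> : invmx (diag_mx d) = diag_mx d_inv.
  have [d_unit _] := mulmx1_unit (mulmx1C d_invK).
  by rewrite -[invmx _]mulmx1 -(mulmx1C d_invK) mulmxA mulVmx ?mul1mx.
rewrite mul_diag_mx; apply/matrixP => i j.
rewrite !mxE /hg_trans (inj_eq enum_val_inj).
case: eqP => _; first by rewrite mulr0 subr0 addr0.
by rewrite mulrN opprK mulrC add0r.
Qed.

End NormalizedLaplacian.

Lemma hg_deg_cnt (T : finType) (H : {set {set T}}) x : hg_deg H x = hg_cnt H x x.
Proof. by apply: eq_card => h; rewrite !inE andbb. Qed.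

Lemma hg_cntC (T : finType) (H : {set {set T}}) x y : hg_cnt H x y = hg_cnt H y x.
Proof. by apply: eq_card => h; rewrite !inE [(x \in h) && _]andbC. Qed.

Lemma card_sep_imset (I T : finType) (F : I -> T) (P : pred T) :
  injective F -> #|[set y in F @: setT | P y]| = #|[set x | P (F x)]|.
Proof.
move=> F_inj; rewrite -(card_imset _ F_inj); apply: eq_card => y; rewrite !inE.
apply/andP/imsetP => [[/imsetP[x _ ->] Py]|[x]]; first by exists x; rewrite ?inE.
by rewrite inE => Px ->; split => //; apply: imset_f.
Qed.

Record hyperflower (T : finType) (l r : nat) (v : 'I_l -> T) (hs : 'I_r -> {set T}) :
    Prop := Hyperflower {
  hf_v_inj : injective v;
  hf_hs_neq0 : forall i, hs i != set0;
  hf_hs_disj : forall i i', i != i' -> [disjoint hs i & hs i'];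
  hf_v_notin_hs : forall i j, v j \notin hs i
}.

Section Flower.
Variables (T : finType) (l r : nat) (v : 'I_l -> T) (hs : 'I_r -> {set T}).
Hypothesis hf : hyperflower v hs.

Let v_inj := hf_v_inj hf.
Let hs_disj := hf_hs_disj hf.
Let v_notin_hs := hf_v_notin_hs hf.

Local Notation V := (flower_V v hs).
Local Notation H := (flower_H v hs).

Definition flower_edge (p : 'I_r * 'I_l) : {set T} := hs p.1 :|: [set v p.2].

Lemma flower_HE : H = flower_edge @: setT.
Proof.
apply/setP => h; apply/imset2P/imsetP => [[i j _ _ ->]|[[i j] _ ->]].
  by exists (i, j).
by exists i j.
Qed.

Lemma petal_neq_peri w i a : w \in hs i -> w != v a.
Proof. by apply: contraTneq => ->; apply: v_notin_hs. Qed.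

Lemma mem_petal w i i' : w \in hs i -> (w \in hs i') = (i' == i).
Proof.
move=> wi; have [-> //|ne] := eqVneq i' i.
by rewrite (disjointFl (hs_disj ne) wi).
Qed.

Lemma peri_in_edge a p : (v a \in flower_edge p) = (p.2 == a).
Proof. by rewrite !inE (negbTE (v_notin_hs _ _)) (inj_eq v_inj) eq_sym. Qed.

Lemma petal_in_edge w i p : w \in hs i -> (w \in flower_edge p) = (p.1 == i).
Proof.
by move=> wi; rewrite !inE (mem_petal _ wi) (negbTE (petal_neq_peri _ wi)) orbF.
Qed.

Lemma flower_edge_inj : injective flower_edge.
Proof.
move=> [i j] [i' j'] e.
have /eqP -> : j' == j by rewrite -(peri_in_edge j (i', j')) -e peri_in_edge.
have /set0Pn [w wi] := hf_hs_neq0 hf i.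
suff /eqP -> : i' == i by [].
by rewrite -(petal_in_edge (i', j') wi) -e (petal_in_edge _ wi).
Qed.

Lemma flower_cntE x y :
  hg_cnt H x y = #|[set p | (x \in flower_edge p) && (y \in flower_edge p)]|.
Proof. by rewrite /hg_cnt flower_HE card_sep_imset //; apply: flower_edge_inj. Qed.

Lemma flower_cnt_peri a b : hg_cnt H (v a) (v b) = ((a == b) * r)%N.
Proof.
rewrite flower_cntE; have [<-|ne] /= := eqVneq a b.
  rewrite mul1n -[in RHS](card_ord r) -cardsT -[RHS]muln1 -(cards1 a) -cardsX.
  by apply: eq_card => p; rewrite in_set !peri_in_edge !inE andbb.
apply: eq_card0 => p; rewrite in_set !peri_in_edge.
by apply/andP => -[/eqP-> /eqP]; apply/eqP.
Qed.

Lemma flower_cnt_peri_petal a w i : w \in hs i -> hg_cnt H (v a) w = 1%N.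
Proof.
move=> wi; rewrite flower_cntE -(cards1 (i, a)); apply: eq_card => -[i' a'].
by rewrite in_set peri_in_edge (petal_in_edge _ wi) !inE xpair_eqE andbC.
Qed.

Lemma flower_cnt_petal w w' i i' : w \in hs i -> w' \in hs i' ->
  hg_cnt H w w' = ((i == i') * l)%N.
Proof.
move=> wi; rewrite flower_cntE; have [<- wi'|ne wi'] /= := eqVneq i i'.
  rewrite mul1n -[in RHS](card_ord l) -cardsT -[RHS]mul1n -(cards1 i) -cardsX.
  apply: eq_card => p.
  by rewrite in_set (petal_in_edge _ wi) (petal_in_edge _ wi') !inE andbb andbT.
apply: eq_card0 => p; rewrite in_set (petal_in_edge _ wi) (petal_in_edge _ wi').
by apply/andP => -[/eqP-> /eqP]; apply/eqP.
Qed.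

Lemma flower_deg_peri a : hg_deg H (v a) = r.
Proof. by rewrite hg_deg_cnt flower_cnt_peri eqxx mul1n. Qed.

Lemma flower_deg_petal w i : w \in hs i -> hg_deg H w = l.
Proof. by move=> wi; rewrite hg_deg_cnt (flower_cnt_petal wi wi) eqxx mul1n. Qed.

Variant flower_vtx_spec (x : T) : Prop :=
  | FlowerPeri a of x = v a
  | FlowerPetal i of x \in hs i.

Lemma flower_vtxP x : x \in V -> flower_vtx_spec x.
Proof.
rewrite inE => /orP[/imsetP[a _ ->]|/bigcupP[i _ xi]]; first exact: FlowerPeri.
exact: FlowerPetal xi.
Qed.

Lemma peri_in_V a : v a \in V.
Proof. by rewrite inE imset_f. Qed.

Lemma petal_in_V w i : w \in hs i -> w \in V.
Proof. by move=> wi; rewrite inE; apply/orP; right; apply/bigcupP; exists i. Qed.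

Lemma card_flower_V : #|V| = (l + #|\bigcup_i hs i|)%N.
Proof.
rewrite cardsU card_imset // card_ord.
have -> : [set v j | j : 'I_l] :&: \bigcup_i hs i = set0.
  apply/setP => x; rewrite !inE; apply/andP => -[/imsetP[a _ ->] /bigcupP[i _]].
  by rewrite (negbTE (v_notin_hs _ _)).
by rewrite cards0 subn0.
Qed.

Section FlowerTransition.
Variable R : numFieldType.

Lemma flower_trans_peri a b : hg_trans R H (v a) (v b) = 0.
Proof.
rewrite /hg_trans (inj_eq v_inj) flower_cnt_peri.
by case: eqVneq => //= _; rewrite mul0n mul0r.
Qed.

Lemma flower_trans_peri_petal a w i : w \in hs i -> hg_trans R H (v a) w = r%:R^-1.
Proof.
move=> wi; rewrite /hg_trans eq_sym (negbTE (petal_neq_peri _ wi)).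
by rewrite (flower_cnt_peri_petal _ wi) flower_deg_peri mul1r.
Qed.

Lemma flower_trans_petal_peri a w i : w \in hs i -> hg_trans R H w (v a) = l%:R^-1.
Proof.
move=> wi; rewrite /hg_trans (negbTE (petal_neq_peri _ wi)) hg_cntC.
by rewrite (flower_cnt_peri_petal _ wi) (flower_deg_petal wi) mul1r.
Qed.

Lemma flower_trans_petal w w' i i' : (0 < l)%N -> w \in hs i -> w' \in hs i' ->
  hg_trans R H w w' = if w == w' then 0 else (i == i')%:R.
Proof.
move=> l_gt0 wi wi'; rewrite /hg_trans (flower_cnt_petal wi wi') (flower_deg_petal wi).
by rewrite natrM mulfK // pnatr_eq0 -lt0n.
Qed.

Lemma flower_deg_neq0 : (0 < l)%N -> (0 < r)%N ->
  {in V, forall x, (hg_deg H x)%:R != 0 :> R}.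
Proof.
move=> l_gt0 r_gt0 x /flower_vtxP [a ->|i xi].
  by rewrite flower_deg_peri pnatr_eq0 -lt0n.
by rewrite (flower_deg_petal xi) pnatr_eq0 -lt0n.
Qed.

End FlowerTransition.

End Flower.

Section Collapse.
Variables (R : numFieldType) (T : finType) (l r : nat).
Variables (v : 'I_l -> T) (hs : 'I_r -> {set T}) (c : 'I_l).
Hypotheses (hf : hyperflower v hs) (r_gt0 : (0 < r)%N).

Let v_inj := hf_v_inj hf.
Let v_notin_hs := hf_v_notin_hs hf.

Let vc : 'I_1 -> T := fun=> v c.
Local Notation V := (flower_V v hs).
Local Notation H := (flower_H v hs).
Local Notation Vc := (flower_V vc hs).
Local Notation Hc := (flower_H vc hs).

Let l_gt0 : (0 < l)%N := leq_ltn_trans (leq0n c) (ltn_ord c).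

Lemma hyperflower_collapse : hyperflower vc hs.
Proof.
case: hf => _ hs_neq0 hs_disj _.
by split=> // [a b _|i j]; [rewrite !ord1 | apply: v_notin_hs].
Qed.
Let hfc := hyperflower_collapse.

Lemma flower_V_collapse : V :\: [set v j | j in [set j | j != c]] = Vc.
Proof.
set B := [set v j | j in [set j | j != c]].
have peri_in_B j : (v j \in B) = (j != c) by rewrite mem_imset ?inE.
have petal_notin_B w i : w \in hs i -> w \notin B.
  by move=> wi; apply/imsetP => -[j _ wj]; move: wi; rewrite wj (negbTE (v_notin_hs _ _)).
apply/setP => x; rewrite in_setD.
apply/andP/idP => [[xnB /flower_vtxP [a xa|i xi]]|/flower_vtxP [a ->|i xi]].
- by move: xnB; rewrite xa peri_in_B negbK => /eqP ->; apply: (peri_in_V vc hs ord0).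
- exact: petal_in_V xi.
- by rewrite /vc peri_in_B eqxx peri_in_V.
- by rewrite (petal_notin_B _ _ xi) (petal_in_V v xi).
Qed.

Lemma flower_H_collapse : [set h in H | [forall j, (j != c) ==> (v j \notin h)]] = Hc.
Proof.
apply/setP => h; rewrite inE !flower_HE.
apply/andP/imsetP => [[/imsetP[[i j] _ ->] /forallP no_v]|[[i a] _ ->]].
  exists (i, ord0) => //; have /implyP := no_v j.
  by rewrite (peri_in_edge hf) eqxx; case: eqVneq => [-> //|_ /(_ isT)].
split; first by apply/imsetP; exists (i, c).
apply/forallP => j; apply/implyP => jc.
by rewrite !inE (negbTE (v_notin_hs _ _)) (inj_eq v_inj).
Qed.

Definition collapse (x : T) : T := if x \in [set v j | j : 'I_l] then v c else x.

Lemma collapse_peri a : collapse (v a) = v c.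
Proof. by rewrite /collapse imset_f. Qed.

Lemma collapse_petal w i : w \in hs i -> collapse w = w.
Proof.
move=> wi; rewrite /collapse; case: imsetP => // -[a _ wa].
by move: wi; rewrite wa (negbTE (v_notin_hs _ _)).
Qed.

Lemma collapse_in : {in V, forall x, collapse x \in Vc}.
Proof.
move=> x /flower_vtxP [a ->|i xi]; first by rewrite collapse_peri (peri_in_V vc hs ord0).
by rewrite (collapse_petal xi) (petal_in_V vc xi).
Qed.

Lemma sum_collapse_fiber_peri (F : T -> R) :
  \sum_(x in V | collapse x == v c) F x = \sum_(a < l) F (v a).
Proof.
rewrite -(big_imset _ (in2W v_inj)) /=; apply: eq_bigl => x.
rewrite /collapse; case: ifP => [/imsetP[a _ ->]|xnv]; first by rewrite peri_in_V eqxx.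
by apply/andP => -[_ /eqP xc]; move: xnv; rewrite xc imset_f.
Qed.

Lemma sum_collapse_fiber_petal (F : T -> R) w i : w \in hs i ->
  \sum_(x in V | collapse x == w) F x = F w.
Proof.
move=> wi; rewrite (big_pred1 w) // => x /=.
apply/andP/eqP => [[/flower_vtxP [a ->|i' xi]]|->].
- rewrite collapse_peri => /eqP vcw.
  by move: wi; rewrite -vcw (negbTE (v_notin_hs _ _)).
- by rewrite (collapse_petal xi) => /eqP.
- by rewrite (collapse_petal wi) (petal_in_V _ wi) eqxx.
Qed.

Lemma trans_collapse :
  {in V &, forall x x', hg_trans R H x x' = hg_trans R H (collapse x) x'}.
Proof.
move=> x x' /flower_vtxP [a ->|i xi]; last by rewrite (collapse_petal xi).
rewrite collapse_peri => /flower_vtxP [b ->|i x'i].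
  by rewrite !(flower_trans_peri hf).
by rewrite !(flower_trans_peri_petal hf _ _ x'i).
Qed.

Lemma trans_collapse_sum : {in Vc &, forall y y',
  hg_trans R Hc y y' = \sum_(x in V | collapse x == y') hg_trans R H y x}.
Proof.
move=> y y' yV /flower_vtxP [a ->|i' y'i].
  rewrite sum_collapse_fiber_peri; case/flower_vtxP: yV => [b ->|i yi].
    by rewrite (flower_trans_peri hfc) big1 // => a' _; rewrite (flower_trans_peri hf).
  rewrite (flower_trans_petal_peri hfc _ a yi) invr1.
  under eq_bigr do rewrite (flower_trans_petal_peri hf _ _ yi).
  by rewrite sumr_const card_ord -(mulr_natr l%:R^-1) mulVf // pnatr_eq0 -lt0n.
rewrite (sum_collapse_fiber_petal _ y'i); case/flower_vtxP: yV => [b ->|i yi].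
  by rewrite (flower_trans_peri_petal hfc _ _ y'i) (flower_trans_peri_petal hf _ _ y'i).
by rewrite (flower_trans_petal hfc _ isT yi y'i) (flower_trans_petal hf _ l_gt0 yi y'i).
Qed.

Lemma card_flower_V_collapse : #|V| = (#|Vc| + (l - 1))%N.
Proof. by rewrite (card_flower_V hf) (card_flower_V hfc) addnAC subnKC. Qed.

Lemma char_poly_flower_collapse :
  char_poly (hg_L R V H) = ('X - 1) ^+ (l - 1) * char_poly (hg_L R Vc Hc).
Proof.
rewrite (hg_LE (flower_deg_neq0 hf R l_gt0 r_gt0)).
rewrite (hg_LE (flower_deg_neq0 hfc R (ltnSn 0) r_gt0)).
apply: (char_poly_lump (pi := collapse)).
- exact: collapse_in.
- exact: trans_collapse.
- exact: trans_collapse_sum.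
- exact: card_flower_V_collapse.
Qed.

End Collapse.

Theorem mainTheorem6 (R : realFieldType) (T : finType) (l r : nat)
    (l_gt0 : (0 < l)%N) (r_gt0 : (0 < r)%N)
    (v : 'I_l -> T) (hs : 'I_r -> {set T})
    (v_inj : injective v)
    (hs_nonempty : forall i, hs i != set0)
    (hs_disj : forall i i', i != i' -> [disjoint hs i & hs i'])
    (v_notin_hs : forall i j, v j \notin hs i) :
  let j1 := Ordinal l_gt0 in
  let V := flower_V v hs in
  let H := flower_H v hs in
  let Vhat := V :\: [set v j | j in [set j : 'I_l | j != j1]] in
  let Hhat := [set h in H | [forall j : 'I_l, (j != j1) ==> (v j \notin h)]] in
  char_poly (hg_L R V H) = ('X - 1) ^+ (l - 1) * char_poly (hg_L R Vhat Hhat).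
Proof.
move=> j1 V H Vhat Hhat.
have hf : hyperflower v hs by split.
rewrite /Vhat /Hhat (flower_V_collapse j1 hf) (flower_H_collapse j1 hf).
exact: char_poly_flower_collapse.
Qed.
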